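(* Let $u_0 \ge 1$ and $r \ge 1$ be integers with $\gcd(u_0,r)=1$. For an integer $n \ge 1$ define $$k_n := \max\left\{0,\ \left\lfloor \frac{n-u_0}{r+1}\right\rfloor + 1\right\}.$$ Let $a \ge 2$ be any given integer. Then for any integers $\alpha \ge a$, $r \ge a$ and $n \ge 2\alpha r$, we have $n - k_n > (\alpha + a - 2) r$.
   Context: $\lfloor x\rfloor$ denotes the largest integer not exceeding $x$. *)

From mathcomp Require Import all_boot all_order all_algebra.
Set Implicit Arguments. Unset Strict Implicit. Unset Printing Implicit Defensive.
Import Order.TTheory GRing.Theory Num.Theory.
Local Open Scope ring_scope.

(* k_n := max{0, floor((n - u0)/(r+1)) + 1}, over the integers.
   For a positive divisor, intdiv's (m %/ d)%Z is the floor of m/d. *)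
Definition kn (u0 r n : int) : int :=
  Num.max 0 (((n - u0) %/ (r + 1))%Z + 1).

From mathcomp Require Import all_boot all_order all_algebra.
From mathcomp Require Import zify.
Set Implicit Arguments. Unset Strict Implicit.
Import Order.TTheory GRing.Theory Num.Theory.
Local Open Scope ring_scope.

(* Since u0 >= 1, the definition gives (r + 1) k_n <= n + r, so that
   (r + 1) (n - k_n) >= r (n - 1).  It remains to check
   n - 1 > (r + 1) (alpha + a - 2), which follows from n >= 2 alpha r because
   2 alpha r - (r + 1) (alpha + a - 2) - 2 = (alpha - a) (r - 1) + 2 (r - a). *)

Lemma mulz_divzS_le (m d : int) : 0 < d -> d * ((m %/ d)%Z + 1) <= m + d.
Proof.
move=> d_gt0; have mod_ge0 := modz_ge0 m (lt0r_neq0 d_gt0).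
by rewrite {2}(divz_eq m d) mulrDr mulr1 mulrC lerD2r lerDl.
Qed.

Lemma mul_kn_le (u0 r n : int) :
  1 <= u0 -> 0 <= r -> 0 <= n -> (r + 1) * kn u0 r n <= n + r.
Proof.
move=> u0_ge1 r_ge0 n_ge0; rewrite /kn /Num.max; case: ifP => _; last by lia.
have := @mulz_divzS_le (n - u0) (r + 1); lia.
Qed.

Lemma mul_sub_kn_ge (u0 r n : int) :
  1 <= u0 -> 0 <= r -> 0 <= n -> r * (n - 1) <= (r + 1) * (n - kn u0 r n).
Proof. move=> u0_ge1 r_ge0 n_ge0; have := mul_kn_le u0_ge1 r_ge0 n_ge0; lia. Qed.

Lemma succ_mul_bound (r a alpha : int) :
  2 <= a -> a <= alpha -> a <= r ->
  (r + 1) * (alpha + a - 2) + 2 <= 2 * alpha * r.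
Proof.
move=> a_ge2 a_le_alpha a_le_r.
have : 0 <= (alpha - a) * (r - 1) by apply: mulr_ge0; lia.
lia.
Qed.

Theorem lemma3p1 (u0 r a alpha n : int) :
  1 <= u0 -> 1 <= r -> gcdz u0 r = 1 ->
  2 <= a -> a <= alpha -> a <= r -> 1 <= n -> 2 * alpha * r <= n ->
  n - kn u0 r n > (alpha + a - 2) * r.
Proof.
move=> u0_ge1 r_ge1 _ a_ge2 a_le_alpha a_le_r n_ge1 n_ge.
have r_ge0 : 0 <= r by lia.
have n_ge0 : 0 <= n by lia.
have bound := succ_mul_bound a_ge2 a_le_alpha a_le_r.
have n_pred_gt : (r + 1) * (alpha + a - 2) * r < r * (n - 1).
  by rewrite [r * _]mulrC ltr_pM2r; lia.
rewrite -(@ltr_pM2l _ (r + 1)) ?mulrA; last by lia.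
exact: lt_le_trans n_pred_gt (mul_sub_kn_ge u0_ge1 r_ge0 n_ge0).
Qed.
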